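(* Let $\mathbb{F}\in\{\mathbb{R},\mathbb{C}\}$, $M>N\ge 1$, and let $\mathcal{P}(M,N)$ be the set of Parseval frames for $\mathbb{F}^N$ with $M$ vectors. If $\Psi\in\mathcal{P}(M,N)$ maximizes $TC$ over $\mathcal{P}(M,N)$, then $$\max\{N,M-N\}\leq TC(\Psi)\leq\sqrt{N(M-N)(M-1)}.$$
   Context: A Parseval frame for $\mathbb{F}^N$ is a family $\{\varphi_i\}_{i=1}^M\subseteq\mathbb{F}^N$ whose $N\times M$ matrix $\Phi$ (columns $\varphi_i$) satisfies $\Phi\Phi^*=I$. The total coherence is $TC(\Phi)=\sum_{i\neq j}|\langle\varphi_i,\varphi_j\rangle|$. *)

From HB Require Import structures.
From mathcomp Require Import all_boot all_order all_algebra.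
From mathcomp Require Import reals complex.
Set Implicit Arguments. Unset Strict Implicit. Unset Printing Implicit Defensive.
Import Order.TTheory GRing.Theory Num.Theory.
Local Open Scope ring_scope.

Section Frames.
Variables (R : realType) (F : pzRingType).
(* conjugation on F (identity for F = R, complex conjugation for F = R[i])
   and modulus |.| : F -> R *)
Variables (conj : F -> F) (absF : F -> R).
Variables (N M : nat).

Definition adjmx (A : 'M[F]_(N, M)) : 'M[F]_(M, N) := \matrix_(i, j) conj (A j i).

Definition parseval (A : 'M[F]_(N, M)) : Prop := A *m adjmx A = 1%:M.

Definition frame_ip (A : 'M[F]_(N, M)) (i j : 'I_M) : F :=
  \sum_(k < N) A k i * conj (A k j).

Definition total_coherence (A : 'M[F]_(N, M)) : R :=
  \sum_(i < M) \sum_(j < M | i != j) absF (frame_ip A i j).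

Definition TC_maximizer (Psi : 'M[F]_(N, M)) : Prop :=
  parseval Psi /\
  forall Phi : 'M[F]_(N, M), parseval Phi ->
    total_coherence Phi <= total_coherence Psi.

Definition TC_bounds (Psi : 'M[F]_(N, M)) : Prop :=
  (maxn N (M - N))%:R <= total_coherence Psi /\
  total_coherence Psi <= Num.sqrt ((N * (M - N) * (M - 1))%:R : R).
End Frames.

(* A Parseval frame has Gram matrix G = Phi^* Phi, an orthogonal projection of trace N; hence
   sum_{i,j} |G_ij|^2 = tr (G^2) = N while sum_i G_ii = N.  Cauchy-Schwarz along each row of G,
   then across the rows, and once more on the diagonal, bounds the off-diagonal l^1 mass
   TC = sum_{i<>j} |G_ij| by sqrt (N (M - N) (M - 1)).  Real frames embed into complex ones
   with the same total coherence, so this bound is only needed over C.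
   For the lower bound a maximizer must beat two explicit real frames: the N + 1 vertices of a
   regular simplex padded by zero vectors (Gram matrix I - J / (N + 1), so TC = N), and N - 1
   orthonormal vectors together with M - N + 1 copies of a unit vector scaled by
   1 / sqrt (M - N + 1) (so TC = M - N). *)

From HB Require Import structures.
From mathcomp Require Import all_boot all_order all_algebra.
From mathcomp Require Import reals complex.
From mathcomp Require Import ring lra zify.
Import Order.TTheory GRing.Theory Num.Theory.
Local Open Scope ring_scope.

Lemma card_ord_neq (n : nat) (i : 'I_n) : #|[pred j | i != j]| = n.-1.
Proof. by rewrite -[n in n.-1]card_ord -(cardC1 i); apply: eq_card => j; rewrite !inE eq_sym. Qed.

Lemma sqr_sum_le_card_sum_sqr {R : realFieldType} {T : finType} (P : pred T) (f : T -> R) :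
  (\sum_(t | P t) f t) ^+ 2 <= #|P|%:R * \sum_(t | P t) f t ^+ 2.
Proof.
set S1 := \sum_(t | P t) f t; set S2 := \sum_(t | P t) f t ^+ 2.
have : 0 <= \sum_(s | P s) \sum_(t | P t) (f s ^+ 2 + f t ^+ 2 - 2 * (f s * f t)).
  apply: sumr_ge0 => s _; apply: sumr_ge0 => t _.
  by have := sqr_ge0 (f s - f t); rewrite sqrrB; lra.
have cross s : \sum_(t | P t) 2 * (f s * f t) = 2 * f s * S1.
  by rewrite mulr_sumr; apply: eq_bigr => t _; rewrite mulrA.
under eq_bigr => s _ do rewrite sumrB big_split /= sumr_const cross.
rewrite sumrB big_split /= sumr_const sumrMnl -mulr_suml -mulr_sumr -/S1 -/S2 -[S2 *+ _]mulr_natl.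
lra.
Qed.

Lemma sum_offdiag_le_sqrt (R : rcfType) (M N : nat) (g : 'I_M -> 'I_M -> R) :
  (0 < M)%N -> (N <= M)%N -> (forall i j, 0 <= g i j) ->
  \sum_i \sum_j g i j ^+ 2 = N%:R -> \sum_i g i i = N%:R ->
  \sum_i \sum_(j | i != j) g i j <= Num.sqrt (N * (M - N) * (M - 1))%:R.
Proof.
move=> M_gt0 NM g_ge0 sum_sqr sum_diag.
pose r i := \sum_(j | i != j) g i j.
have row_le i : r i ^+ 2 <= (M%:R - 1) * (\sum_j g i j ^+ 2 - g i i ^+ 2).
  have -> : \sum_j g i j ^+ 2 - g i i ^+ 2 = \sum_(j | i != j) g i j ^+ 2.
    by rewrite (bigD1 i) //= addrAC subrr add0r; apply: eq_bigl => j; rewrite eq_sym.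
  have := sqr_sum_le_card_sum_sqr [pred j | i != j] (g i).
  by rewrite card_ord_neq -subn1 natrB.
have rows_le : \sum_i r i ^+ 2 <= (M%:R - 1) * (N%:R - \sum_i g i i ^+ 2).
  by rewrite -sum_sqr -sumrB mulr_sumr; apply: ler_sum => i _; exact: row_le.
have := sqr_sum_le_card_sum_sqr predT r; rewrite cardT size_enum_ord => outer_le.
have := sqr_sum_le_card_sum_sqr predT (fun i => g i i).
rewrite cardT size_enum_ord sum_diag => diag_le.
have r_ge0 : 0 <= \sum_i r i by do 2!apply: sumr_ge0 => ? _.
have M_ge1 : 1 <= M%:R :> R by rewrite ler1n.
rewrite -(ger0_norm r_ge0) -sqrtr_sqr ler_wsqrtr // !natrM !natrB //.
nra.
Qed.

Lemma sum_comp_inj_le {R : numDomainType} {I J : finType} (P : pred I) (g : J -> I) (h : I -> R) :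
  injective g -> (forall i, P i -> 0 <= h i) ->
  \sum_(j | P (g j)) h (g j) <= \sum_(i | P i) h i.
Proof.
move=> g_inj h_ge0; rewrite [X in _ <= X](bigID [in g @: setT]) /=.
have -> : \sum_(j | P (g j)) h (g j) = \sum_(i | P i && (i \in g @: setT)) h i.
  rewrite (eq_bigl (fun i => (i \in g @: setT) && P i)) => [|i]; last exact: andbC.
  by rewrite big_imset_cond; [apply: eq_bigl => j; rewrite in_setT | exact: in2W].
by apply: ler_wpDr; [apply: sumr_ge0 => i /andP[/h_ge0] | ].
Qed.

Lemma mul_const_mx {R : pzRingType} {m n p : nat} (x y : R) :
  (const_mx x : 'M_(m, n)) *m (const_mx y : 'M_(n, p)) = const_mx (n%:R * x * y).
Proof.
apply/matrixP => i j; rewrite !mxE; under eq_bigr do rewrite !mxE.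
by rewrite sumr_const card_ord -mulrA mulr_natl.
Qed.

Lemma tr_row_mx_mul {R : pzRingType} {m n1 n2 : nat} (A : 'M[R]_(m, n1)) (B : 'M[R]_(m, n2)) :
  (row_mx A B)^T *m row_mx A B = block_mx (A^T *m A) (A^T *m B) (B^T *m A) (B^T *m B).
Proof. by rewrite tr_row_mx mul_col_row. Qed.

Lemma row_mx_mul_tr {R : pzRingType} {m n1 n2 : nat} (A : 'M[R]_(m, n1)) (B : 'M[R]_(m, n2)) :
  row_mx A B *m (row_mx A B)^T = A *m A^T + B *m B^T.
Proof. by rewrite tr_row_mx mul_row_col. Qed.

Lemma frame_ip_id {R : pzRingType} {N M : nat} (A : 'M[R]_(N, M)) i j :
  frame_ip (fun x => x) A i j = (A^T *m A) i j.
Proof. by rewrite !mxE; apply: eq_bigr => k _; rewrite mxE. Qed.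

Lemma parseval_idE {R : pzRingType} {N M : nat} (A : 'M[R]_(N, M)) :
  parseval (fun x => x) A = (A *m A^T = 1%:M).
Proof. by congr (_ *m _ = _); apply/matrixP => i j; rewrite !mxE. Qed.

Lemma frame_ip_row_mx_lshift {F : pzRingType} (conj : F -> F) {N n1 n2 : nat}
    (A : 'M[F]_(N, n1)) (B : 'M[F]_(N, n2)) i j :
  frame_ip conj (row_mx A B) (lshift n2 i) (lshift n2 j) = frame_ip conj A i j.
Proof. by apply: eq_bigr => k _; rewrite !row_mxEl. Qed.

Lemma total_coherence_ge_clique {R : realType} {F : pzRingType} {conj : F -> F} {absF : F -> R}
    {N M k : nat} {A : 'M[F]_(N, M)} {g : 'I_k -> 'I_M} {c : R} :
  (forall x, 0 <= absF x) -> injective g ->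
  (forall i j, i != j -> absF (frame_ip conj A (g i) (g j)) = c) ->
  (k * k.-1)%:R * c <= total_coherence conj absF A.
Proof.
move=> absF_ge0 g_inj clique; rewrite /total_coherence.
apply: le_trans (sum_comp_inj_le predT g _ g_inj _); last first.
  by move=> i _; apply: sumr_ge0.
apply: le_trans (ler_sum _ (fun i _ => sum_comp_inj_le _ g _ g_inj (fun j _ => absF_ge0 _))).
have row (i : 'I_k) :
    \sum_(j | g i != g j) absF (frame_ip conj A (g i) (g j)) = c *+ k.-1.
  rewrite (eq_bigl (fun j => i != j)) => [|j]; last by rewrite (inj_eq g_inj).
  rewrite (eq_bigr (fun _ => c)) => [|j]; last exact: clique.
  by rewrite sumr_const card_ord_neq.
under eq_bigr do rewrite row.
by rewrite sumr_const card_ord -mulrnA mulr_natl mulnC.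
Qed.

Section Simplex.
Variables (R : realType) (N : nat).
Hypothesis N_gt0 : (0 < N)%N.

Let s : R := (Num.sqrt (1 + N)%:R)^-1.
Let a : R := (1 + s) / N%:R.

Let s_sqrE : s ^+ 2 = (1 + N)%:R^-1.
Proof. by rewrite exprVn sqr_sqrtr ?ler0n. Qed.

Let s_sqr : s ^+ 2 * (1 + N%:R) = 1.
Proof. by rewrite s_sqrE -[1 + N%:R]/(1%:R + N%:R) -natrD mulVf // pnatr_eq0. Qed.

Let N_neq0 : N%:R != 0 :> R.
Proof. by rewrite pnatr_eq0 -lt0n. Qed.

Let Na : N%:R * a = 1 + s.
Proof. by rewrite mulrC divfK. Qed.

Let a_off : a * (1 - s) = s ^+ 2.
Proof.
apply: (mulfI N_neq0); rewrite mulrA Na; have := s_sqr; nra.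
Qed.

(* A regular simplex: the columns s (1,...,1) and e_k - a (1,...,1), where a is the value that
   makes the rows orthonormal. *)
Definition simplex_frame : 'M[R]_(N, 1 + N) :=
  row_mx (const_mx s) (1%:M - a *: const_mx 1).

Let tr_simplex_block : (1%:M - a *: const_mx 1 : 'M[R]_N)^T = 1%:M - a *: const_mx 1.
Proof. by rewrite linearB linearZ /= trmx1 trmx_const. Qed.

Lemma simplex_frame_gram :
  simplex_frame^T *m simplex_frame = 1%:M - (1 + N)%:R^-1 *: const_mx 1.
Proof.
rewrite -s_sqrE.
rewrite tr_row_mx_mul tr_simplex_block trmx_const.
rewrite !(mulmxBl, mulmxBr, mul1mx, mulmx1) -!scalemxAl -!scalemxAr !mul_const_mx.
apply/matrixP => i j.
case: (split_ordP i) => {}i ->; case: (split_ordP j) => {}j ->;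
  rewrite ?(block_mxEul, block_mxEur, block_mxEdl, block_mxEdr) !mxE
          ?eq_lshift ?eq_rshift ?eq_lrshift ?eq_rlshift.
- by rewrite !ord1 eqxx /=; have := s_sqr; nra.
- by rewrite !mulr1 mulrA [a * N%:R]mulrC Na /=; ring.
- by rewrite !mulr1 mulrA [a * N%:R]mulrC Na /=; ring.
- by rewrite !mulr1 [a * N%:R]mulrC Na; have := a_off; lra.
Qed.

Lemma simplex_frame_parseval : parseval (fun x => x) simplex_frame.
Proof.
rewrite parseval_idE row_mx_mul_tr tr_simplex_block trmx_const.
rewrite !(mulmxBl, mulmxBr, mul1mx, mulmx1) -!scalemxAl -!scalemxAr !mul_const_mx.
apply/matrixP => i j; rewrite !mxE !mulr1 [a * N%:R]mulrC Na.
by have := a_off; lra.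
Qed.

Lemma simplex_frame_ip i j : i != j ->
  frame_ip (fun x => x) simplex_frame i j = - (1 + N)%:R^-1.
Proof. by move=> ij; rewrite frame_ip_id simplex_frame_gram !mxE (negbTE ij) mulr1 sub0r. Qed.

End Simplex.

Section Collinear.
Variables (R : realType) (n K : nat).
Hypothesis K_gt0 : (0 < K)%N.

Let s : R := (Num.sqrt K%:R)^-1.

Let s_sqr : s ^+ 2 = K%:R^-1.
Proof. by rewrite exprVn sqr_sqrtr ?ler0n. Qed.

Definition collinear_frame : 'M[R]_(1 + n, K + n) :=
  row_mx (col_mx (const_mx s) 0) (col_mx 0 1%:M).

Lemma collinear_frame_parseval : parseval (fun x => x) collinear_frame.
Proof.
rewrite parseval_idE row_mx_mul_tr !tr_col_mx !mul_col_row add_block_mx.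
rewrite !(mulmx0, mul0mx, mul1mx, trmx0, trmx1, trmx_const, addr0, add0r) mul_const_mx.
rewrite [RHS]scalar_mx_block; congr block_mx.
apply/matrixP => i j; rewrite !ord1 !mxE eqxx -mulrA -expr2 s_sqr mulfV //.
by rewrite pnatr_eq0 -lt0n.
Qed.

Lemma collinear_frame_ip i j :
  frame_ip (fun x => x) collinear_frame (lshift n i) (lshift n j) = K%:R^-1.
Proof.
rewrite frame_ip_row_mx_lshift frame_ip_id tr_col_mx mul_row_col.
by rewrite trmx0 mul0mx addr0 trmx_const mul_const_mx mxE mul1r -expr2 s_sqr.
Qed.

End Collinear.

Lemma exists_parseval_tc_ge_dim (R : realType) (N M : nat) : (0 < N)%N -> (N < M)%N ->
  exists2 A : 'M[R]_(N, M), parseval (fun x => x) A &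
    N%:R <= total_coherence (fun x => x) (fun x => `|x|) A.
Proof.
move=> N_gt0 NM; have [m ->] : exists m, M = (1 + N + m)%N by exists (M - N.+1)%N; lia.
exists (row_mx (simplex_frame R N) 0).
  have := simplex_frame_parseval R N N_gt0; rewrite !parseval_idE => S_parseval.
  by rewrite row_mx_mul_tr S_parseval mul0mx addr0.
have clique i j : i != j ->
    `|frame_ip (fun x => x) (row_mx (simplex_frame R N) 0) (lshift m i) (lshift m j)|
    = (1 + N)%:R^-1.
  move=> ij; rewrite frame_ip_row_mx_lshift simplex_frame_ip // normrN.
  by rewrite ger0_norm // invr_ge0 ler0n.
apply: le_trans (total_coherence_ge_clique (@normr_ge0 _ _) (@lshift_inj _ m) clique).
by rewrite natrM mulrAC mulfV ?mul1r // pnatr_eq0.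
Qed.

Lemma exists_parseval_tc_ge_codim (R : realType) (N M : nat) : (0 < N)%N -> (N <= M)%N ->
  exists2 A : 'M[R]_(N, M), parseval (fun x => x) A &
    (M - N)%:R <= total_coherence (fun x => x) (fun x => `|x|) A.
Proof.
case: N => [//|n] _ NM; have [K K_gt0 ->] : exists2 K, (0 < K)%N & M = (K + n)%N.
  by exists (M - n)%N; lia.
exists (collinear_frame R n K); first exact: collinear_frame_parseval.
have clique (i j : 'I_K) : i != j ->
    `|frame_ip (fun x => x) (collinear_frame R n K) (lshift n i) (lshift n j)| = K%:R^-1.
  by move=> _; rewrite collinear_frame_ip ger0_norm // invr_ge0 ler0n.
apply: le_trans (total_coherence_ge_clique (@normr_ge0 _ _) (@lshift_inj _ n) clique).
rewrite natrM mulrAC mulfV ?mul1r ?pnatr_eq0 -?lt0n // ler_nat; lia.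
Qed.

Lemma exists_parseval_tc_ge_max (R : realType) (N M : nat) : (0 < N)%N -> (N < M)%N ->
  exists2 A : 'M[R]_(N, M), parseval (fun x => x) A &
    (maxn N (M - N))%:R <= total_coherence (fun x => x) (fun x => `|x|) A.
Proof.
move=> N_gt0 NM; case: (leqP (M - N) N) => _.
  exact: exists_parseval_tc_ge_dim.
exact: exists_parseval_tc_ge_codim (ltnW NM).
Qed.

Local Open Scope complex_scope.

Section ComplexParseval.
Variables (R : realType) (N M : nat) (A : 'M[R[i]]_(N, M)).
Hypothesis A_parseval : parseval (@conjc R) A.

Let G := (adjmx (@conjc R) A *m A)^T.

Let frame_ipE i j : frame_ip (@conjc R) A i j = G i j.
Proof. by rewrite !mxE; apply: eq_bigr => k _; rewrite mxE mulrC. Qed.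

Lemma frame_ip_conj i j : (frame_ip (@conjc R) A i j)^* = frame_ip (@conjc R) A j i.
Proof.
rewrite rmorph_sum; apply: eq_bigr => k _.
by rewrite rmorphM /= conjcK mulrC.
Qed.

Let G_idem : G *m G = G.
Proof. by rewrite -trmx_mul mulmxA -(mulmxA (adjmx _ A)) A_parseval mulmx1. Qed.

Let G_trace : \tr G = N%:R.
Proof. by rewrite mxtrace_tr mxtrace_mulC A_parseval mxtrace1. Qed.

Lemma sum_normc_frame_ip_sqr :
  \sum_i \sum_j Normc.normc (frame_ip (@conjc R) A i j) ^+ 2 = N%:R.
Proof.
apply: (@complexI R); rewrite rmorph_nat rmorph_sum -G_trace -G_idem.
apply: eq_bigr => i _; rewrite rmorph_sum mxE; apply: eq_bigr => j _.
by rewrite rmorphXn /= sqr_normc frame_ip_conj !frame_ipE.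
Qed.

Lemma sum_normc_frame_ip_diag : \sum_i Normc.normc (frame_ip (@conjc R) A i i) = N%:R.
Proof.
apply: (@complexI R); rewrite rmorph_nat rmorph_sum -G_trace.
apply: eq_bigr => i _; rewrite -frame_ipE; apply: ger0_norm.
by apply: sumr_ge0 => k _; exact: mulcJ_ge0.
Qed.

Lemma total_coherence_le_sqrt : (0 < M)%N -> (N <= M)%N ->
  total_coherence (@conjc R) (@Normc.normc R) A <= Num.sqrt (N * (M - N) * (M - 1))%:R.
Proof.
move=> M_gt0 NM; apply: sum_offdiag_le_sqrt => //.
- by move=> i j; case: (frame_ip _ _ _ _) => x y; exact: sqrtr_ge0.
- exact: sum_normc_frame_ip_sqr.
- exact: sum_normc_frame_ip_diag.
Qed.

End ComplexParseval.

Section Complexify.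
Variables (R : realType) (N M : nat) (A : 'M[R]_(N, M)).

Local Notation AC := (map_mx (real_complex R) A).

Let adjmx_complexify : adjmx (@conjc R) AC = map_mx (real_complex R) (adjmx (fun x => x) A).
Proof. by apply/matrixP => i j; rewrite !mxE conjc_real. Qed.

Lemma parseval_complexify : parseval (fun x => x) A -> parseval (@conjc R) AC.
Proof. by rewrite /parseval adjmx_complexify -map_mxM => ->; rewrite map_mx1. Qed.

Let frame_ip_complexify i j :
  frame_ip (@conjc R) AC i j = (frame_ip (fun x => x) A i j)%:C.
Proof.
by rewrite rmorph_sum; apply: eq_bigr => k _; rewrite !mxE conjc_real rmorphM.
Qed.

Lemma total_coherence_complexify :
  total_coherence (@conjc R) (@Normc.normc R) AC =
  total_coherence (fun x => x) (fun x => `|x|) A.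
Proof.
apply: eq_bigr => i _; apply: eq_bigr => j _.
by rewrite frame_ip_complexify /Normc.normc /= expr0n /= addr0 sqrtr_sqr.
Qed.

End Complexify.

Theorem proposition3 (R : realType) (M N : nat) (hN : (1 <= N)%N) (hNM : (N < M)%N) :
  (* F = R *)
  (forall Psi : 'M[R]_(N, M),
     TC_maximizer (fun x : R => x) (fun x : R => `|x|) Psi ->
     TC_bounds (fun x : R => x) (fun x : R => `|x|) Psi) /\
  (* F = C = R[i] *)
  (forall Psi : 'M[R[i]]_(N, M),
     TC_maximizer (@conjc R) (@Normc.normc R) Psi ->
     TC_bounds (@conjc R) (@Normc.normc R) Psi).
Proof.
have M_gt0 : (0 < M)%N by lia.
have NM : (N <= M)%N by lia.
have [A A_parseval A_tc] := exists_parseval_tc_ge_max R N M hN hNM.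
split=> Psi [Psi_parseval Psi_max]; split.
- exact: le_trans A_tc (Psi_max A A_parseval).
- rewrite -total_coherence_complexify.
  by apply: total_coherence_le_sqrt => //; exact: parseval_complexify.
- apply: le_trans A_tc _; rewrite -total_coherence_complexify.
  by apply: Psi_max; exact: parseval_complexify.
- exact: total_coherence_le_sqrt.
Qed.
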